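(* Fix a cell $c$ and let ${\cal L}_c:\mathbb{R}\times\mathbb{R}^{n_c}\to\mathbb{R}^{n_c}$ be a linear map (the constitutive relation ${\bf u}_c={\cal L}_c(p_c,{\bm\lambda}_c)$ of a mixed-hybrid scheme). Assume ${\cal L}_c$ is linearity preserving: for every affine function $q({\bf x})=a+{\bf g}\cdot{\bf x}$ ($a\in\mathbb{R}$, ${\bf g}\in\mathbb{R}^d$), $$ {\cal L}_c\big(q({\bf x}_c),(q({\bf x}_f))_{f\in\partial c}\big)=\big(-{\bf n}_f\cdot{\mathbb K}_c{\bf g}\big)_{f\in\partial c}. $$ Then: (i) there exists an $n_c\times n_c$ matrix ${\mathsf W}_{{\cal F},c}$ such that ${\cal L}_c(p_c,{\bm\lambda}_c)={\mathsf W}_{{\cal F},c}{\mathsf F}_c\Sigma_c(p_c\mathbb{1}-{\bm\lambda}_c)$ for all $(p_c,{\bm\lambda}_c)$, and ${\mathsf W}_{{\cal F},c}{\mathsf R}_c={\mathsf N}_c$ (i.e. the scheme belongs to the extended mixed-hybrid family); (ii) if moreover the bilinear form ${\cal B}((\tilde p_c,\tilde{\bm\lambda}_c),(p_c,{\bm\lambda}_c)):=(\tilde p_c\mathbb{1}-\tilde{\bm\lambda}_c)^T\Sigma_c{\mathsf F}_c\,{\cal L}_c(p_c,{\bm\lambda}_c)$ is symmetric and satisfies ${\cal B}((p_c,{\bm\lambda}_c),(p_c,{\bm\lambda}_c))>0$ whenever $p_c\mathbb{1}\neq{\bm\lambda}_c$, then ${\mathsf W}_{{\cal F},c}$ is symmetric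 positive definite and ${\mathsf M}_{{\cal F},c}:={\mathsf W}_{{\cal F},c}^{-1}$ is symmetric positive definite with ${\mathsf M}_{{\cal F},c}{\mathsf N}_c={\mathsf R}_c$ (a member of the mimetic family); and if in addition there are constants $0<C_1\le C_2$ with $C_1|c|\,\|{\bf u}\|^2\le{\cal B}((p_c,{\bm\lambda}_c),(p_c,{\bm\lambda}_c))\le C_2|c|\,\|{\bf u}\|^2$ for all $(p_c,{\bm\lambda}_c)$, where ${\bf u}={\cal L}_c(p_c,{\bm\lambda}_c)$ and $\|\cdot\|$ is the Euclidean norm, then $C_1|c|\,\|{\bf v}\|^2\le{\bf v}^T{\mathsf M}_{{\cal F},c}{\bf v}\le C_2|c|\,\|{\bf v}\|^2$ for all ${\bf v}\in\mathbb{R}^{n_c}$.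
   Context: $c\subset\mathbb{R}^d$ ($d=2,3$) is a polygonal/polyhedral cell with $n_c$ flat faces $f$, centroid ${\bf x}_c$, face centroids ${\bf x}_f$, face measures $|f|$, cell measure $|c|$. Each face has a fixed unit normal ${\bf n}_f$; ${\bf n}_{c,f}$ is the exterior unit normal and $\sigma_{c,f}={\bf n}_f\cdot{\bf n}_{c,f}\in\{\pm1\}$. ${\mathbb K}_c$ is a constant symmetric positive definite $d\times d$ tensor. ${\mathsf F}_c=\mathrm{diag}(|f|)_{f\in\partial c}$, $\Sigma_c=\mathrm{diag}(\sigma_{c,f})_{f\in\partial c}$, $\mathbb{1}=(1,\dots,1)^T\in\mathbb{R}^{n_c}$. ${\mathsf N}_c$ and ${\mathsf R}_c$ are the $n_c\times d$ matrices with entries $({\mathsf N}_c)_{f,i}={\bf n}_f\cdot{\mathbb K}_c{\bf e}_i$ and $({\mathsf R}_c)_{f,i}=\sigma_{c,f}|f|\,(x_{f,i}-x_{c,i})$, where ${\bf e}_i$ is the $i$-th coordinate vector and $x_{f,i},x_{c,i}$ are the $i$-th coordinates of ${\bf x}_f,{\bf x}_c$. *)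

From HB Require Import structures.
From mathcomp Require Import all_boot all_order all_algebra.
Set Implicit Arguments. Unset Strict Implicit. Unset Printing Implicit Defensive.
Import Order.TTheory GRing.Theory Num.Theory.
Local Open Scope ring_scope.

Definition symmx (R : realFieldType) (n : nat) (A : 'M[R]_n) : Prop := A^T = A.
Definition spdmx (R : realFieldType) (n : nat) (A : 'M[R]_n) : Prop :=
  A^T = A /\ forall v : 'cV[R]_n, v != 0 -> 0 < (v^T *m A *m v) 0 0.

Definition sqnorm (R : realFieldType) (n : nat) (v : 'cV[R]_n) : R := (v^T *m v) 0 0.

Definition ones (R : realFieldType) (n : nat) : 'cV[R]_n := const_mx 1.

Definition Fmat (R : realFieldType) (nc : nat) (area : 'I_nc -> R) : 'M[R]_nc :=
  diag_mx (\row_f area f).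
Definition Sigmat (R : realFieldType) (nc : nat) (sigma : 'I_nc -> R) : 'M[R]_nc :=
  diag_mx (\row_f sigma f).

Definition Nmat (R : realFieldType) (nc d : nat) (nf : 'I_nc -> 'rV[R]_d)
  (K : 'M[R]_d) : 'M[R]_(nc, d) :=
  \matrix_(f, i) (nf f *m K) 0 i.

Definition Rmat (R : realFieldType) (nc d : nat) (sigma area : 'I_nc -> R)
  (xf : 'I_nc -> 'rV[R]_d) (xc : 'rV[R]_d) : 'M[R]_(nc, d) :=
  \matrix_(f, i) (sigma f * area f * (xf f 0 i - xc 0 i)).

Definition linear_pair (R : realFieldType) (nc : nat)
  (L : R -> 'cV[R]_nc -> 'cV[R]_nc) : Prop :=
  forall (a b p p' : R) (lam lam' : 'cV[R]_nc),
    L (a * p + b * p') (a *: lam + b *: lam') = a *: L p lam + b *: L p' lam'.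

Definition lin_preserving (R : realFieldType) (nc d : nat)
  (L : R -> 'cV[R]_nc -> 'cV[R]_nc) (xc : 'rV[R]_d) (xf nf : 'I_nc -> 'rV[R]_d)
  (K : 'M[R]_d) : Prop :=
  forall (a : R) (g : 'cV[R]_d),
    L (a + (xc *m g) 0 0) (\col_f (a + (xf f *m g) 0 0))
    = \col_f (- (nf f *m K *m g) 0 0).

Definition Bform (R : realFieldType) (nc : nat) (sigma area : 'I_nc -> R)
  (L : R -> 'cV[R]_nc -> 'cV[R]_nc) (pt : R) (lamt : 'cV[R]_nc)
  (p : R) (lam : 'cV[R]_nc) : R :=
  (((pt *: ones R nc - lamt)^T *m Sigmat sigma *m Fmat area) *m L p lam) 0 0.

From HB Require Import structures.
From mathcomp Require Import all_boot all_order all_algebra.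
Set Implicit Arguments. Unset Strict Implicit. Unset Printing Implicit Defensive.
Import Order.TTheory GRing.Theory Num.Theory.
Local Open Scope ring_scope.

(* Exactness on constants makes [L] vanish on every pair [(p, p 1)], so by
   linearity [L] depends on [p 1 - lam] only, through a matrix [G]; as
   [F Sigma] is invertible, [W := G (F Sigma)^-1].  Exactness on the affine
   functions [x |-> x_i - x_{c,i}] then reads [G X = N], where [X] collects the
   vectors [x_f - x_c], and [R = F Sigma X] gives [W R = N].  The form [B] is
   the quadratic form of [W] in the flux variables [F Sigma (p 1 - lam)],
   which exhaust [R^nc]; so symmetry, positivity and the bounds of [B] pass to
   [W], and to [W^-1] through the substitution [v = W u]. *)

Section FieldMatrices.
Variables (R : fieldType) (n : nat).

Lemma linear_col_mx (f : 'cV[R]_n -> 'cV[R]_n) :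
  (forall (a b : R) u v, f (a *: u + b *: v) = a *: f u + b *: f v) ->
  exists A : 'M[R]_n, forall w, f w = A *m w.
Proof.
move=> f_lin; exists (\matrix_(i, j) f (delta_mx j 0) i 0) => w.
have f0 : f 0 = 0 by have := f_lin 0 0 0 0; rewrite !scale0r addr0.
have fD : {morph f : x y / x + y >-> x + y}.
  by move=> x y; have := f_lin 1 1 x y; rewrite !scale1r.
have fZ a x : f (a *: x) = a *: f x.
  by have := f_lin a 0 x 0; rewrite !scale0r !addr0.
rewrite {1}(matrix_sum_delta w) (big_morph f fD f0).
apply/matrixP => i k; rewrite ord1 summxE !mxE; apply: eq_bigr => j _.
by rewrite big_ord1 fZ !mxE mulrC.
Qed.

Lemma diag_mx_unit (e : 'I_n -> R) :
  (forall f, e f != 0) -> diag_mx (\row_f e f) \in unitmx.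
Proof.
move=> e_neq0; rewrite unitmxE det_diag unitfE.
by apply/prodf_neq0 => f _; rewrite mxE.
Qed.

End FieldMatrices.

Section PositiveDefinite.
Variables (R : realFieldType) (n : nat).
Implicit Types (W : 'M[R]_n) (u v : 'cV[R]_n).

Lemma quad_delta W i j :
  ((delta_mx i 0 : 'cV[R]_n)^T *m W *m (delta_mx j 0 : 'cV[R]_n)) 0 0 = W i j.
Proof. by rewrite trmx_delta -rowE -colE !mxE. Qed.

Lemma symmx_quad W :
  (forall u v, (u^T *m W *m v) 0 0 = (v^T *m W *m u) 0 0) -> symmx W.
Proof. by move=> Wsym; apply/matrixP => i j; rewrite mxE -!quad_delta Wsym. Qed.

Lemma spdmx_unit W : spdmx W -> W \in unitmx.
Proof.
case=> WT Wpos; rewrite -row_free_unit; apply: inj_row_free => u uW0.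
apply/eqP/negPn/negP => u_neq0.
by have := Wpos u^T; rewrite trmx_eq0 trmxK uW0 mul0mx mxE ltxx => /(_ u_neq0).
Qed.

Lemma quad_invmx W v : symmx W -> W \in unitmx ->
  (v^T *m invmx W *m v) 0 0
  = ((invmx W *m v)^T *m W *m (invmx W *m v)) 0 0.
Proof. by move=> WT Wu; rewrite trmx_mul trmx_inv WT mulmxKV // mulmxA. Qed.

Lemma spdmx_inv W : spdmx W -> spdmx (invmx W).
Proof.
move=> Wspd; have Wu := spdmx_unit Wspd; case: Wspd => WT Wpos.
split; first by rewrite trmx_inv WT.
move=> v v_neq0; rewrite quad_invmx //; apply: Wpos.
by apply: contra v_neq0 => /eqP Wv0; rewrite -(mulKVmx Wu v) Wv0 mulmx0.
Qed.

End PositiveDefinite.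

Section ConstitutiveRelation.
Variables (R : realFieldType) (nc : nat) (L : R -> 'cV[R]_nc -> 'cV[R]_nc).
Hypothesis L_lin : linear_pair L.

Lemma linear_pair_factor :
  (forall p, L p (p *: ones R nc) = 0) ->
  exists G : 'M[R]_nc, forall p lam, L p lam = G *m (p *: ones R nc - lam).
Proof.
move=> L_const.
have [A LA] : exists A : 'M[R]_nc, forall w, L 0 w = A *m w.
  apply: linear_col_mx => a b u v.
  by have := L_lin a b 0 0 u v; rewrite !mulr0 addr0.
exists (- A) => p lam.
have := L_lin 1 1 p 0 (p *: ones R nc) (lam - p *: ones R nc).
rewrite mulr0 addr0 mul1r !scale1r addrC subrK => ->.
by rewrite L_const add0r LA mulNmx -mulmxN opprB.
Qed.

End ConstitutiveRelation.

Section LinearityPreserving.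
Variables (R : realFieldType) (nc d : nat) (L : R -> 'cV[R]_nc -> 'cV[R]_nc).
Variables (xc : 'rV[R]_d) (xf nf : 'I_nc -> 'rV[R]_d) (K : 'M[R]_d).
Hypothesis L_lp : lin_preserving L xc xf nf K.

Definition centroid_offsets : 'M[R]_(nc, d) :=
  \matrix_(f, i) (xf f 0 i - xc 0 i).

Lemma lin_preserving_const p : L p (p *: ones R nc) = 0.
Proof.
have := L_lp p 0; rewrite mulmx0 mxE addr0.
have -> : \col_f (p + (xf f *m (0 : 'cV_d)) 0 0) = p *: ones R nc.
  by apply/matrixP => i j; rewrite mxE mulmx0 !mxE addr0 mulr1.
by move->; apply/matrixP => i j; rewrite mxE mulmx0 !mxE oppr0.
Qed.

Lemma lin_preserving_consistency (G : 'M[R]_nc) :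
  (forall p lam, L p lam = G *m (p *: ones R nc - lam)) ->
  G *m centroid_offsets = Nmat nf K.
Proof.
move=> LG; apply/matrixP => f i; pose e : 'cV[R]_d := delta_mx i 0.
have := L_lp (- (xc *m e) 0 0) e; rewrite addNr LG scale0r sub0r.
have -> : \col_g (- (xc *m e) 0 0 + (xf g *m e) 0 0) = col i centroid_offsets.
  by apply/matrixP => a b; rewrite mxE -[xf a *m _]colE -[xc *m _]colE !mxE addrC.
rewrite mulmxN colE mulmxA -colE => /(canRL (@opprK _)).
move/(congr1 (fun u : 'cV[R]_nc => u f 0)); rewrite mxE => ->.
by rewrite mxE mxE opprK -colE !mxE.
Qed.

End LinearityPreserving.

Section MixedHybrid.
Variables (R : realFieldType) (nc : nat) (area sigma : 'I_nc -> R).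
Hypotheses (area_neq0 : forall f, area f != 0)
           (sigma_neq0 : forall f, sigma f != 0).

Let D := Fmat area *m Sigmat sigma.

Lemma Fmat_Sigmat_unit : D \in unitmx.
Proof. by rewrite unitmx_mul !diag_mx_unit. Qed.

Lemma Rmat_Fmat_Sigmat d (xf : 'I_nc -> 'rV[R]_d) (xc : 'rV[R]_d) :
  Rmat sigma area xf xc = D *m centroid_offsets xc xf.
Proof.
apply/matrixP => f i.
by rewrite /D -mulmxA /Fmat /Sigmat !mul_diag_mx !mxE mulrA [area f * _]mulrC.
Qed.

Variables (W : 'M[R]_nc) (L : R -> 'cV[R]_nc -> 'cV[R]_nc).
Hypothesis LW : forall p lam, L p lam = W *m D *m (p *: ones R nc - lam).

Lemma Bform_flux pt lamt p lam :
  Bform sigma area L pt lamt p lam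
  = ((D *m (pt *: ones R nc - lamt))^T *m W *m (D *m (p *: ones R nc - lam))) 0 0.
Proof.
have DT : D^T = Sigmat sigma *m Fmat area by rewrite trmx_mul !tr_diag_mx.
by rewrite /Bform LW trmx_mul DT !mulmxA.
Qed.

Let state (u : 'cV[R]_nc) := - (invmx D *m u).

Lemma flux_state u : D *m (0 *: ones R nc - state u) = u.
Proof. by rewrite scale0r sub0r opprK mulKVmx // Fmat_Sigmat_unit. Qed.

Lemma L_state u : L 0 (state u) = W *m u.
Proof. by rewrite LW -mulmxA flux_state. Qed.

Lemma Bform_state ut u :
  Bform sigma area L 0 (state ut) 0 (state u) = (ut^T *m W *m u) 0 0.
Proof. by rewrite Bform_flux !flux_state. Qed.

Lemma Bform_sym_symmx :
  (forall pt lamt p lam,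
     Bform sigma area L pt lamt p lam = Bform sigma area L p lam pt lamt) ->
  symmx W.
Proof.
by move=> Bsym; apply: symmx_quad => u v; rewrite -!Bform_state Bsym.
Qed.

Lemma Bform_pos_spdmx :
  (forall pt lamt p lam,
     Bform sigma area L pt lamt p lam = Bform sigma area L p lam pt lamt) ->
  (forall p lam, p *: ones R nc != lam -> 0 < Bform sigma area L p lam p lam) ->
  spdmx W.
Proof.
move=> Bsym Bpos; split; first exact: Bform_sym_symmx.
move=> u u_neq0; rewrite -Bform_state; apply: Bpos.
apply: contra u_neq0 => /eqP state0.
by rewrite -(flux_state u) -state0 subrr mulmx0.
Qed.

Lemma Bform_bounds_invmx (vol C1 C2 : R) :
  spdmx W ->
  (forall p lam,
     C1 * vol * sqnorm (L p lam) <= Bform sigma area L p lam p lam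
     /\ Bform sigma area L p lam p lam <= C2 * vol * sqnorm (L p lam)) ->
  forall v : 'cV[R]_nc,
    C1 * vol * sqnorm v <= (v^T *m invmx W *m v) 0 0
    /\ (v^T *m invmx W *m v) 0 0 <= C2 * vol * sqnorm v.
Proof.
move=> Wspd B_bounds v; have Wu := spdmx_unit Wspd.
have := B_bounds 0 (state (invmx W *m v)).
by rewrite Bform_state L_state mulKVmx // -quad_invmx //; case: Wspd.
Qed.

End MixedHybrid.

Theorem mainTheorem2 (R : realFieldType) (d nc : nat)
  (xc : 'rV[R]_d) (xf nf : 'I_nc -> 'rV[R]_d)
  (area sigma : 'I_nc -> R) (vol : R) (K : 'M[R]_d)
  (L : R -> 'cV[R]_nc -> 'cV[R]_nc)
  (Hd : (d == 2%N) || (d == 3%N))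
  (Hvol : 0 < vol)
  (Harea : forall f, 0 < area f)
  (Hsigma : forall f, sigma f = 1 \/ sigma f = -1)
  (Hnf : forall f, (nf f *m (nf f)^T) 0 0 = 1)
  (HK : spdmx K)
  (HLlin : linear_pair L)
  (HLP : lin_preserving L xc xf nf K) :
  exists W : 'M[R]_nc,
    ((forall (p : R) (lam : 'cV[R]_nc),
        L p lam = W *m Fmat area *m Sigmat sigma *m (p *: ones R nc - lam))
     /\ W *m Rmat sigma area xf xc = Nmat nf K)
    /\
    ((forall pt lamt p lam,
        Bform sigma area L pt lamt p lam = Bform sigma area L p lam pt lamt) ->
     (forall p lam, p *: ones R nc != lam -> 0 < Bform sigma area L p lam p lam) ->
     spdmx W /\ W \in unitmx /\ spdmx (invmx W)
     /\ invmx W *m Nmat nf K = Rmat sigma area xf xc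
     /\ (forall C1 C2 : R, 0 < C1 -> C1 <= C2 ->
          (forall p lam,
             C1 * vol * sqnorm (L p lam) <= Bform sigma area L p lam p lam
             /\ Bform sigma area L p lam p lam <= C2 * vol * sqnorm (L p lam)) ->
          forall v : 'cV[R]_nc,
            C1 * vol * sqnorm v <= (v^T *m invmx W *m v) 0 0
            /\ (v^T *m invmx W *m v) 0 0 <= C2 * vol * sqnorm v)).
Proof.
have area_neq0 f : area f != 0 by rewrite gt_eqF.
have sigma_neq0 f : sigma f != 0.
  by case: (Hsigma f) => ->; rewrite ?oppr_eq0 oner_eq0.
have [G LG] := linear_pair_factor HLlin (lin_preserving_const HLP).
have Du := Fmat_Sigmat_unit area_neq0 sigma_neq0.
set W := G *m invmx (Fmat area *m Sigmat sigma).
have LW p lam :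
    L p lam = W *m (Fmat area *m Sigmat sigma) *m (p *: ones R nc - lam).
  by rewrite mulmxKV.
have WR : W *m Rmat sigma area xf xc = Nmat nf K.
  rewrite Rmat_Fmat_Sigmat mulmxA mulmxKV //.
  by rewrite (lin_preserving_consistency HLP LG).
exists W; split.
  by split=> // p lam; rewrite LW mulmxA.
move=> Bsym Bpos.
have Wspd := Bform_pos_spdmx area_neq0 sigma_neq0 LW Bsym Bpos.
split=> //; split; first exact: spdmx_unit.
split; first exact: spdmx_inv.
split; first by rewrite -WR mulKmx // spdmx_unit.
by move=> C1 C2 _ _; apply: Bform_bounds_invmx.
Qed.
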